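(* Let $b<-1$ and let $\lambda_1>0$ be a constant such that $(\mathcal{L}\eta,\eta)\ge\lambda_1\|\eta\|^2_{H^1_\alpha}$ for all $\eta\in H^1_\alpha$ with $\int\eta Q'\,dx=\int\eta\,SQ\,dx=0$. Then there exists $\theta>0$ such that every $\eta\in H^1_\alpha$ satisfying $$\Big|\Big(\eta,\frac{SQ}{\|SQ\|_{L^2}}\Big)\Big|+\Big|\Big(\eta,\frac{Q'}{\|Q'\|_{L^2}}\Big)\Big|\le\theta\|\eta\|_{H^1_\alpha}$$ obeys $(\mathcal{L}\eta,\eta)\ge\frac{3\lambda_1}{4}\|\eta\|^2_{H^1_\alpha}$.
   Context: Throughout, $b<-1$, $\nu=-\frac{b+1}{2}>0$. Fix $A>0$, $x_*\in\mathbb{R}$; the lefton is $Q(x)=A\frac{1-b}{2}(\cosh\nu(x-x_* ))^{b/\nu}$. Set $k=(A\frac{1-b}{2})^{\frac1b+1}$, $\alpha=Q^{-\frac1b-2}$. $H^1_\alpha$ is $H^1(\mathbb{R})$ with norm $\|f\|^2_{H^1_\alpha}=\int(f^2+f_x^2)\alpha\,dx$. $(f,g)=\int fg\,dx$ is the $L^2$ inner product. $SQ=\frac{2k(1-b)}{b}Q^{-\frac1b}+\frac{2(b-1)}{b}Q$. $(\mathcal{L}\eta,\eta)=\frac{2k}{b^2}\int\eta_x^2\alpha\,dx-\frac{2k(b+1)}{b}\int\eta^2\alpha\,dx$. *)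

From HB Require Import structures.
From mathcomp Require Import all_boot all_order all_algebra.
From mathcomp Require Import all_classical all_reals all_analysis.
Set Implicit Arguments. Unset Strict Implicit. Unset Printing Implicit Defensive.
Import Order.TTheory GRing.Theory Num.Theory.
Import numFieldNormedType.Exports.
Local Open Scope classical_set_scope.
Local Open Scope ring_scope.

Section Defs.
Variable R : realType.


Definition coshR (x : R) : R := (expR x + expR (- x)) / 2.

Definition nu (b : R) : R := - (b + 1) / 2.

Definition Q (b A xs : R) (x : R) : R :=
  A * (1 - b) / 2 * powR (coshR (nu b * (x - xs))) (b / nu b).

Definition dQ (b A xs : R) : R -> R := derive1 (Q b A xs).

Definition kk (b A : R) : R := powR (A * (1 - b) / 2) (b^-1 + 1).

Definition alpha (b A xs : R) (x : R) : R :=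
  powR (Q b A xs x) (- b^-1 - 2).

Definition SQ (b A xs : R) (x : R) : R :=
  2 * kk b A * (1 - b) / b * powR (Q b A xs x) (- b^-1)
  + 2 * (b - 1) / b * Q b A xs x.

Definition ip (f g : R -> R) : R := \int[@lebesgue_measure R]_x (f x * g x).

Definition L2norm (f : R -> R) : R := Num.sqrt (\int[@lebesgue_measure R]_x (f x ^+ 2)).

(* eta belongs to H^1_alpha, with (weak) derivative g:
   eta, g in L^2, g locally integrable and eta(y) - eta(x) = int_x^y g
   (absolutely continuous representative), and the weighted norm is finite. *)
Definition H1alpha (b A xs : R) (eta g : R -> R) : Prop :=
  [/\ measurable_fun setT eta /\ measurable_fun setT g,
      (@lebesgue_measure R).-integrable setT (EFin \o (fun x => eta x ^+ 2)),
      (@lebesgue_measure R).-integrable setT (EFin \o (fun x => g x ^+ 2)) /\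
      (forall x y : R, x <= y ->
         (@lebesgue_measure R).-integrable `[x, y] (EFin \o g) /\
         eta y - eta x = \int[@lebesgue_measure R]_(t in `[x, y]) g t),
      (@lebesgue_measure R).-integrable setT (EFin \o (fun x => eta x ^+ 2 * alpha b A xs x))
    & (@lebesgue_measure R).-integrable setT (EFin \o (fun x => g x ^+ 2 * alpha b A xs x))].

Definition H1a_sqnorm (b A xs : R) (eta g : R -> R) : R :=
  \int[@lebesgue_measure R]_x ((eta x ^+ 2 + g x ^+ 2) * alpha b A xs x).

Definition H1a_norm (b A xs : R) (eta g : R -> R) : R :=
  Num.sqrt (H1a_sqnorm b A xs eta g).

Definition Lform (b A xs : R) (eta g : R -> R) : R :=
  2 * kk b A / b ^+ 2 * \int[@lebesgue_measure R]_x (g x ^+ 2 * alpha b A xs x)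
  - 2 * kk b A * (b + 1) / b * \int[@lebesgue_measure R]_x (eta x ^+ 2 * alpha b A xs x).

End Defs.

From HB Require Import structures.
From mathcomp Require Import all_boot all_order all_algebra.
From mathcomp Require Import all_classical all_reals all_analysis.
From mathcomp Require Import measurable_realfun exponential_distribution ring lra.
Set Implicit Arguments. Unset Strict Implicit. Unset Printing Implicit Defensive.
Import Order.TTheory GRing.Theory Num.Theory.
Import numFieldNormedType.Exports.
Local Open Scope classical_set_scope.
Local Open Scope ring_scope.

(* The form is coercive, with constant lambda1, on the codimension-two subspace
   where (eta, Q') = (eta, SQ) = 0.  Linear algebra in the plane provides two
   fixed elements w1, w2 of H^1_alpha and a constant K such that every eta has a
   correction u = a w1 + c w2 with the same two inner products and
   a^2 + c^2 <= K ((eta, SQ)^2 + (eta, Q')^2); thus v = eta - u lies in the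
   subspace, while the hypothesis gives ||u||^2 <= C theta^2 ||eta||^2.
   Expanding the weighted square integrals of eta = v + u and of its derivative
   with Young's inequality of small parameter d, passing from v to eta costs at
   most lambda1/8 ||eta||^2 + O(1/d) ||u||^2, which is below
   lambda1/4 ||eta||^2 once theta is small.  The inner products are linear in
   eta because SQ and Q' are square integrable: Q decays like exp(b |x - x_*|). *)

Local Notation mu := (@lebesgue_measure _).
Local Notation integrableT f := (mu.-integrable setT (EFin \o f)).

Lemma sqrD_le (R : realDomainType) (u v : R) : (u + v) ^+ 2 <= 2 * u ^+ 2 + 2 * v ^+ 2.
Proof. by rewrite -subr_ge0 (_ : _ - _ = (u - v) ^+ 2) ?sqr_ge0 //; ring. Qed.

Lemma norm_mul_le_sqr (R : realFieldType) (t s u : R) : 0 < t ->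
  `|s * u| <= t / 2 * s ^+ 2 + (2 * t)^-1 * u ^+ 2.
Proof.
move=> t0; rewrite -subr_ge0 normrM -[s ^+ 2]real_normK ?num_real // -[u ^+ 2]real_normK ?num_real //.
rewrite (_ : _ - _ = (t * `|s| - `|u|) ^+ 2 / (2 * t)); last by field; rewrite gt_eqF.
by rewrite divr_ge0 ?sqr_ge0 // mulr_ge0 // ltW.
Qed.

Lemma sqrD_le_eps (R : realFieldType) (d s t : R) : 0 < d ->
  (s + t) ^+ 2 <= (1 + d) * s ^+ 2 + (1 + d^-1) * t ^+ 2.
Proof.
move=> d0; have := norm_mul_le_sqr s t d0; rewrite invfM.
have := ler_norm (s * t); lra.
Qed.

Lemma sqrD_ge_eps (R : realFieldType) (d s t : R) : 0 < d ->
  (1 - d) * s ^+ 2 - d^-1 * t ^+ 2 <= (s + t) ^+ 2.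
Proof.
move=> d0; have := norm_mul_le_sqr s t d0; rewrite invfM.
have := sqr_ge0 t; have := ler_norm (- (s * t)); rewrite normrN; lra.
Qed.

Lemma le0_of_le_mul_gt0 (R : realFieldType) (x E : R) : 0 <= E ->
  (forall t, 0 < t -> x <= t * E) -> x <= 0.
Proof.
move=> E0 h; apply/ler_addgt0Pr => r r0; rewrite add0r.
apply: le_trans (h (r / (E + 1)) _) _; first by rewrite divr_gt0 //; lra.
by rewrite mulrAC ler_pdivrMr; [nra | lra].
Qed.

Lemma exists_small_sqr (R : realFieldType) (Z e : R) : 0 <= Z -> 0 < e ->
  exists2 t, 0 < t & Z * t ^+ 2 <= e.
Proof.
move=> Z0 e0; have Ze : 0 < Z + e by lra.
have t0 : 0 < e / (Z + e) by rewrite divr_gt0.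
have t1 : e / (Z + e) <= 1 by rewrite ler_pdivrMr // mul1r; lra.
exists (e / (Z + e)) => //; apply: (@le_trans _ _ (Z * (e / (Z + e)))).
  by rewrite expr2 mulrA; have := mulr_ge0 Z0 (ltW t0); nra.
by rewrite mulrA ler_pdivrMr // mulrC ler_pM2l //; lra.
Qed.

(* P, D: the weighted square integrals of eta = v + u and of its derivative;
   Pv, Dv and Pu, Du: the same for v and for u. *)
Lemma perturbed_coercivity (R : realFieldType) (c1 c2 l d P D Pv Dv Pu Du : R) :
  0 <= c1 -> 0 <= c2 -> 0 < l -> 0 < d -> d * (l + c2) <= l / 32 ->
  0 <= Pv -> 0 <= Dv -> 0 <= Pu -> 0 <= Du -> 0 <= P + D ->
  (1 - d) * Dv - d^-1 * Du <= D ->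
  P <= (1 + d) * Pv + (1 + d^-1) * Pu ->
  (1 - d) * (P + D) - d^-1 * (Pu + Du) <= Pv + Dv ->
  l * (Pv + Dv) <= c1 * Dv - c2 * Pv ->
  (c1 + 2 * c2 + l) / d * (Pu + Du) <= l / 8 * (P + D) ->
  3 * l / 4 * (P + D) <= c1 * D - c2 * P.
Proof.
move=> c10 c20 l0 d0 dsmall Pv0 Dv0 Pu0 Du0 N0 hD hP hN hcoer hsmall.
have d1 : d <= 1 / 32.
  have := mulr_ge0 (ltW d0) c20; nra.
have id1 : 1 <= d^-1 by rewrite invf_ge1 //; lra.
have hperturb : (1 - d) * (c1 * Dv - c2 * Pv) - 2 * d * c2 * Pv
    - (c1 + 2 * c2) / d * (Pu + Du) <= c1 * D - c2 * P.
  have := ler_wpM2l c10 hD; have := ler_wpM2l c20 hP.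
  have : 0 <= c2 * ((d^-1 - 1) * Pu) by rewrite !mulr_ge0 // subr_ge0.
  have : 0 <= c1 * d^-1 * Pu by rewrite !mulr_ge0 // invr_ge0 ltW.
  have : 0 <= c2 * d^-1 * Du by rewrite !mulr_ge0 // invr_ge0 ltW.
  lra.
have hv : 15 * l / 16 * (Pv + Dv)
    <= (1 - d) * (c1 * Dv - c2 * Pv) - 2 * d * c2 * Pv.
  have := mulr_ge0 (mulr_ge0 (ltW d0) c20) Dv0.
  have := ler_wpM2r (addr_ge0 Pv0 Dv0) dsmall.
  have d1' : 0 <= 1 - d by lra.
  have := ler_wpM2l d1' hcoer.
  have := mulr_ge0 (mulr_ge0 (ltW d0) c20) Pv0.
  nra.
have := ler_wpM2l (mulr_ge0 (ltW l0) (ltW d0)) N0.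
have : 0 <= l / 16 * d^-1 * (Pu + Du) by rewrite !mulr_ge0 ?addr_ge0 // ?invr_ge0 ltW.
have := ler_wpM2l (mulr_ge0 (ltW l0) N0) d1.
have := ler_wpM2l (ltW l0) hN.
lra.
Qed.

Section planar_span.
Variable R : realFieldType.

Lemma sqr_dot2_le (p q r s : R) :
  (p * q + r * s) ^+ 2 <= (p ^+ 2 + r ^+ 2) * (q ^+ 2 + s ^+ 2).
Proof. by rewrite -subr_ge0 (_ : _ - _ = (p * s - r * q) ^+ 2) ?sqr_ge0 //; ring. Qed.

Lemma span_independent2 (u1 v1 u2 v2 s t : R) : u1 * v2 - v1 * u2 != 0 ->
  exists a c, [/\ s = a * u1 + c * u2, t = a * v1 + c * v2 &
    a ^+ 2 + c ^+ 2 <= (u1 ^+ 2 + v1 ^+ 2 + u2 ^+ 2 + v2 ^+ 2) / (u1 * v2 - v1 * u2) ^+ 2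
                       * (s ^+ 2 + t ^+ 2)].
Proof.
set det := _ - _ => det0; have det2 : 0 < det ^+ 2 by rewrite exprn_even_gt0.
exists ((s * v2 + t * - u2) / det), ((u1 * t + v1 * - s) / det).
split; [by rewrite /det; field | by rewrite /det; field |].
rewrite !expr_div_n -mulrDl mulrAC ler_pM2r ?invr_gt0 //.
have := sqr_dot2_le s v2 t (- u2); have := sqr_dot2_le u1 t v1 (- s).
rewrite !sqrrN; lra.
Qed.

Lemma span_collinear (u v s t : R) : u ^+ 2 + v ^+ 2 != 0 -> u * t = v * s ->
  exists a, [/\ s = a * u, t = a * v & a ^+ 2 <= (u ^+ 2 + v ^+ 2)^-1 * (s ^+ 2 + t ^+ 2)].
Proof.
set n := _ + _ => n0 hc; have n_gt0 : 0 < n by rewrite lt_def n0 addr_ge0 ?sqr_ge0.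
have hc0 : u * t - v * s = 0 by rewrite hc subrr.
exists ((s * u + t * v) / n); split; last first.
  rewrite expr_div_n ler_pdivrMr ?exprn_gt0 // mulrAC [n ^+ 2]expr2 mulrA mulVf // mul1r.
  by rewrite [n * _]mulrC; exact: sqr_dot2_le.
all: apply: (mulIf n0); rewrite mulrAC divfK //; apply/eqP; rewrite -subr_eq0 /n.
- by rewrite (_ : _ - _ = u * (u * t - v * s)); [rewrite hc0 mulr0 | ring].
- by rewrite (_ : _ - _ = - v * (u * t - v * s)); [rewrite hc0 mulr0 | ring].
Qed.

Lemma planar_span_bounded (X : Type) (H : X -> Prop) (f g : X -> R) :
  (exists x, H x) -> exists x1 x2 K, [/\ H x1, H x2, 0 <= K &
    forall y, H y -> exists a c, [/\ f y = a * f x1 + c * f x2,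
      g y = a * g x1 + c * g x2 & a ^+ 2 + c ^+ 2 <= K * (f y ^+ 2 + g y ^+ 2)]].
Proof.
move=> [x0 Hx0].
have [[x1 [x2 [H1 H2 det0]]] | indep] :=
  pselect (exists x1 x2, [/\ H x1, H x2 & f x1 * g x2 - g x1 * f x2 != 0]).
  exists x1, x2, ((f x1 ^+ 2 + g x1 ^+ 2 + f x2 ^+ 2 + g x2 ^+ 2) / (f x1 * g x2 - g x1 * f x2) ^+ 2).
  split=> //; first by rewrite divr_ge0 ?sqr_ge0 // !addr_ge0 ?sqr_ge0.
  by move=> y _; apply: span_independent2.
have coll x y : H x -> H y -> f x * g y = g x * f y.
  move=> Hx Hy; apply/eqP; rewrite -subr_eq0; apply/negPn/negP => det0.
  by apply: indep; exists x, y.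
have [[x1 [H1 n0]] | zero] := pselect (exists x1, H x1 /\ f x1 ^+ 2 + g x1 ^+ 2 != 0).
  exists x1, x1, (f x1 ^+ 2 + g x1 ^+ 2)^-1; split=> //; first by rewrite invr_ge0 addr_ge0 ?sqr_ge0.
  move=> y Hy; have [a [ea1 ea2 ha]] := span_collinear n0 (coll _ _ H1 Hy).
  by exists a, 0; rewrite !mul0r !addr0 expr0n addr0.
exists x0, x0, 0; split=> // y Hy; exists 0, 0; rewrite !mul0r !addr0 expr0n /= addr0.
have n0 : f y ^+ 2 + g y ^+ 2 = 0.
  by apply/eqP; apply/negPn/negP => n0; apply: zero; exists y.
have := sqr_ge0 (f y); have := sqr_ge0 (g y).
by split => //; apply/eqP; rewrite -sqrf_eq0; apply/eqP; lra.
Qed.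

End planar_span.

(** * The lefton *)

Definition sinhR (R : realType) (x : R) : R := (expR x - expR (- x)) / 2.

Lemma coshR_gt0 (R : realType) (x : R) : 0 < coshR x.
Proof. by rewrite /coshR divr_gt0 // addr_gt0 // expR_gt0. Qed.

Lemma half_expR_norm_le_coshR (R : realType) (x : R) : expR `|x| / 2 <= coshR x.
Proof.
rewrite /coshR; have := expR_ge0 x; have := expR_ge0 (- x).
by have [x0|x0] := leP 0 x; [rewrite ger0_norm | rewrite ltr0_norm]; lra.
Qed.

Lemma norm_sinhR_le_coshR (R : realType) (x : R) : `|sinhR x| <= coshR x.
Proof.
rewrite /sinhR /coshR ler_norml; have := expR_ge0 x; have := expR_ge0 (- x).
by move=> *; apply/andP; split; lra.
Qed.

Lemma is_derive_coshR (R : realType) (x : R) : is_derive x 1 (@coshR R) (sinhR x).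
Proof.
have hN : is_derive x 1 (expR \o -%R) (expR (- x) * -1) by exact: is_derive1_comp.
have := is_deriveZ (2^-1) (is_deriveD (is_derive_expR x) hN).
have -> : 2^-1 \*: (expR + (expR \o -%R)) = @coshR R.
  by apply/funext => t; rewrite /coshR /= mulrC.
by rewrite /sinhR mulrN1 mulrC.
Qed.

Lemma measurable_coshR (R : realType) : measurable_fun setT (@coshR R).
Proof.
apply: measurable_funM => //; apply: measurable_funD; first exact: measurable_expR.
by apply: measurableT_comp; [exact: measurable_expR | exact: measurable_funN].
Qed.

Lemma measurable_sinhR (R : realType) : measurable_fun setT (@sinhR R).
Proof.
apply: measurable_funM => //; apply: measurable_funB; first exact: measurable_expR.
by apply: measurableT_comp; [exact: measurable_expR | exact: measurable_funN].
Qed.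

Lemma integrable_expNnorm (R : realType) : integrableT (fun x : R => expR (- `|x|)).
Proof.
have cf : continuous (fun x : R => expR (- `|x|)).
  move=> x; apply: continuous_comp; last exact: continuous_expR.
  apply: (@continuousN _ R^o); exact: norm_continuous.
apply/integrableP; split.
  by apply/measurable_EFinP; exact: continuous_measurable_fun.
under eq_integral do rewrite /= ger0_norm ?expR_ge0//.
rewrite ge0_symfun_integralT => //; last by move=> x /=; rewrite normrN.
(* on [0, +oo) the integrand is the exponential density of rate 1 *)
rewrite (_ : \int[mu]_(x in _) _ =
    \int[mu]_(x in [set x : R | (0 <= x)%R]) (exponential_pdf 1 x)%:E)%E; last first.
  by apply: eq_integral => x; rewrite inE /= => x0; rewrite exponential_pdfE// mul1r mulN1r ger0_norm.
apply: lte_mul_pinfty => //; apply: (@le_lt_trans _ _ 1%E); last exact: ltry.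
rewrite -(@integral_exponential_pdf R 1 ltr01).
apply: ge0_subset_integral => //.
- by rewrite -set_itvcy.
- by apply/measurable_EFinP; exact: measurable_exponential_pdf.
- by move=> x _; rewrite lee_fin exponential_pdf_ge0.
Qed.

Lemma integrable_sqr_le_expNnorm (R : realType) (f : R -> R) (C : R) :
  measurable_fun setT f -> (forall x, f x ^+ 2 <= C * expR (- `|x|)) ->
  integrableT (fun x => f x ^+ 2).
Proof.
move=> mf fC; have iC := integrableZl measurableT C (@integrable_expNnorm R).
apply: le_integrable iC => //; first exact/measurable_EFinP/measurable_funX.
move=> x _ /=; rewrite lee_fin ger0_norm ?sqr_ge0 //.
exact: le_trans (fC x) (ler_norm _).
Qed.

Section lefton.
Variables (R : realType) (b A xs : R).
Hypotheses (hb : b < -1) (hA : 0 < A).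

Let K := A * (1 - b) / 2.
Let y (x : R) := nu b * (x - xs).

Lemma nu_gt0 : 0 < nu b.
Proof. by rewrite /nu; have := hb; lra. Qed.

Let K_gt0 : 0 < K.
Proof. by rewrite /K !mulr_gt0 // ?invr_gt0 //; have := hb; lra. Qed.

Lemma Q_gt0 x : 0 < Q b A xs x.
Proof. by rewrite /Q mulr_gt0 ?K_gt0 // powR_gt0 // coshR_gt0. Qed.

Lemma is_derive_Q (x : R) :
  is_derive x 1 (Q b A xs) (b * K * powR (coshR (y x)) (b / nu b - 1) * sinhR (y x)).
Proof.
have hy : is_derive x 1 y (nu b).
  have := is_deriveZ (nu b) (is_deriveB (is_derive_id x 1) (is_derive_cst xs x 1)).
  by rewrite subr0 [_ *: 1]mulr1.
have hc : is_derive x 1 (@coshR R \o y) (sinhR (y x) * nu b).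
  exact/is_derive1_comp/is_derive_coshR.
have hp := @is_derive1_comp _ _ (@coshR R \o y) x _ _ (is_derive1_powR (b / nu b) (coshR_gt0 (y x))) hc.
have := is_deriveZ K hp; congr is_derive.
have nu0 := nu_gt0.
by rewrite -[_ *: _]/(K * _); field; exact: lt0r_neq0.
Qed.

Lemma dQE : dQ b A xs =
  (fun x => b * K * powR (coshR (y x)) (b / nu b - 1) * sinhR (y x)).
Proof. by apply/funext => x; rewrite /dQ derive1E; have [] := is_derive_Q x. Qed.

Lemma norm_dQ_le x : `|dQ b A xs x| <= - b * Q b A xs x.
Proof.
have b0 : b < 0 by have := hb; lra.
set c := coshR (y x); have c0 : 0 < c := coshR_gt0 _.
set P := powR c (b / nu b - 1); have P0 : 0 <= P := powR_ge0 _ _.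
have cP : P * c = powR c (b / nu b).
  by rewrite -{1}[c]powRr1 ?ltW // /P -powRD ?subrK // (gt_eqF c0) implybT.
rewrite dQE /Q -/K -/(y x) -/c -cP normrM ler0_norm; last first.
  by rewrite -mulrA nmulr_rle0 // mulr_ge0 ?(ltW K_gt0).
rewrite (_ : - b * (K * (P * c)) = - (b * K * P) * c); last by ring.
by rewrite ler_wpM2l ?norm_sinhR_le_coshR // oppr_ge0 -mulrA nmulr_rle0 // mulr_ge0 ?(ltW K_gt0).
Qed.

(* ln (cosh y) >= |y| - ln 2 and (b / nu) * nu = b give
   Q^p <= C exp (p b |x - xs|) <= C exp (|xs| - |x|). *)
Lemma powR_Q_le p : 0 < p -> p * b <= -1 ->
  exists C, forall x, powR (Q b A xs x) p <= C * expR (- `|x|).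
Proof.
move=> p0 pb; have nu0 := nu_gt0; set e := b / nu b.
have e0 : e < 0 by rewrite /e pmulr_llt0 ?invr_gt0 //; have := hb; lra.
exists (expR (p * (ln K - e * ln 2) + `|xs|)) => x.
rewrite -expRD /powR gt_eqF ?Q_gt0 // ler_expR.
rewrite /Q -/K lnM ?posrE ?powR_gt0 ?coshR_gt0 // ln_powR -/e -/(y x).
have hcosh : `|y x| - ln 2 <= ln (coshR (y x)).
  have := half_expR_norm_le_coshR (y x).
  by rewrite -ler_ln ?posrE ?coshR_gt0 ?divr_gt0 ?expR_gt0 // ln_div ?posrE ?expR_gt0 // expRK.
have hy : e * `|y x| = b * `|x - xs|.
  by rewrite /y normrM gtr0_norm // mulrA divfK ?gt_eqF.
have hxs : `|x| <= `|x - xs| + `|xs| by rewrite -{1}(subrK xs x) ler_normD.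
have he : e * ln (coshR (y x)) <= e * `|y x| - e * ln 2.
  by rewrite -mulrBr ler_wnM2l // ltW.
have hpb : p * (b * `|x - xs|) <= - `|x - xs|.
  by rewrite mulrA; have := normr_ge0 (x - xs); nra.
have := ler_wpM2l (ltW p0) he; rewrite hy.
lra.
Qed.

Let measurable_y : measurable_fun setT y.
Proof. by apply: measurable_funM => //; apply: measurable_funD. Qed.

Lemma measurable_Q : measurable_fun setT (Q b A xs).
Proof.
apply: measurable_funM => //.
exact: measurableT_comp (measurable_powR _) (measurableT_comp (@measurable_coshR R) measurable_y).
Qed.

Lemma measurable_alpha : measurable_fun setT (alpha b A xs).
Proof. exact: measurableT_comp (measurable_powR _) measurable_Q. Qed.

Lemma measurable_SQ : measurable_fun setT (SQ b A xs).
Proof.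
apply: measurable_funD; apply: measurable_funM => //; last exact: measurable_Q.
exact: measurableT_comp (measurable_powR _) measurable_Q.
Qed.

Lemma measurable_dQ : measurable_fun setT (dQ b A xs).
Proof.
rewrite dQE; apply: measurable_funM; last exact: measurableT_comp (@measurable_sinhR R) measurable_y.
apply: measurable_funM => //.
exact: measurableT_comp (measurable_powR _) (measurableT_comp (@measurable_coshR R) measurable_y).
Qed.

Lemma integrable_SQ_sqr : integrableT (fun x => SQ b A xs x ^+ 2).
Proof.
have b0 : b < 0 by have := hb; lra.
have [C1 hC1] : exists C, forall x, powR (Q b A xs x) (- b^-1 * 2) <= C * expR (- `|x|).
  apply: powR_Q_le; first by rewrite mulNr oppr_gt0 pmulr_llt0 // invr_lt0.
  by rewrite mulrAC mulNr mulVf ?lt_eqF // mulN1r; lra.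
have [C2 hC2] : exists C, forall x, powR (Q b A xs x) 2 <= C * expR (- `|x|).
  by apply: powR_Q_le; have := hb; lra.
set c3 := 2 * kk b A * (1 - b) / b; set c4 := 2 * (b - 1) / b.
apply: (integrable_sqr_le_expNnorm (C := 2 * c3 ^+ 2 * C1 + 2 * c4 ^+ 2 * C2)) => [|x].
  exact: measurable_SQ.
have Q0 := ltW (Q_gt0 x).
rewrite /SQ -/c3 -/c4; apply: le_trans (sqrD_le _ _) _.
rewrite [(c3 * _) ^+ 2]exprMn [(c4 * _) ^+ 2]exprMn -(powR_mulrn 2 Q0) -(powR_mulrn 2 (powR_ge0 _ _)) -powRrM.
have := ler_wpM2l (sqr_ge0 c3) (hC1 x); have := ler_wpM2l (sqr_ge0 c4) (hC2 x).
clearbody c3 c4; lra.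
Qed.

Lemma integrable_dQ_sqr : integrableT (fun x => dQ b A xs x ^+ 2).
Proof.
have [C hC] : exists C, forall x, powR (Q b A xs x) 2 <= C * expR (- `|x|).
  by apply: powR_Q_le; have := hb; lra.
apply: (integrable_sqr_le_expNnorm (C := b ^+ 2 * C)) => [|x].
  exact: measurable_dQ.
apply: (@le_trans _ _ (b ^+ 2 * powR (Q b A xs x) 2)); last first.
  by rewrite -mulrA ler_wpM2l ?sqr_ge0.
rewrite (powR_mulrn 2 (ltW (Q_gt0 x))) -real_normK ?num_real //.
have := normr_ge0 (dQ b A xs x); have := norm_dQ_le x; nra.
Qed.

End lefton.

Section linear_combination.
Context d (T : measurableType d) (R : realType) (m : {measure set T -> \bar R}).
Variables (D : set T) (mD : measurable D).

Lemma integrable_comb (p c : R) (f g : T -> R) :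
  m.-integrable D (EFin \o f) -> m.-integrable D (EFin \o g) ->
  m.-integrable D (EFin \o (fun x => p * f x + c * g x)).
Proof.
move=> mf mg; have := integrableD mD (integrableZl mD p mf) (integrableZl mD c mg).
by apply: eq_integrable => // x _ /=; rewrite EFinD !EFinM.
Qed.

Lemma Rintegral_comb (p c : R) (f g : T -> R) :
  m.-integrable D (EFin \o f) -> m.-integrable D (EFin \o g) ->
  \int[m]_(x in D) (p * f x + c * g x) =
    p * \int[m]_(x in D) f x + c * \int[m]_(x in D) g x.
Proof.
move=> mf mg; rewrite RintegralD ?RintegralZl //.
- by have := integrableZl mD p mf; apply: eq_integrable => // x _ /=; rewrite EFinM.
- by have := integrableZl mD c mg; apply: eq_integrable => // x _ /=; rewrite EFinM.
Qed.

End linear_combination.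

Section weighted_square.
Variables (R : realType) (w : R -> R).
Hypotheses (mw : measurable_fun setT w) (w_ge0 : forall x, 0 <= w x).

Definition weighted_L2 (f : R -> R) :=
  measurable_fun setT f /\ integrableT (fun x => f x ^+ 2 * w x).

Definition wsqr (f : R -> R) : R := \int[mu]_x (f x ^+ 2 * w x).

Lemma wsqr_ge0 f : 0 <= wsqr f.
Proof. by apply: Rintegral_ge0 => x _; rewrite mulr_ge0 ?sqr_ge0. Qed.

Lemma weighted_L2_comb (p c : R) f g : weighted_L2 f -> weighted_L2 g ->
  weighted_L2 (fun x => p * f x + c * g x).
Proof.
move=> [mf hf] [mg hg]; have mpc : measurable_fun setT (fun x => p * f x + c * g x).
  by apply: measurable_funD; apply: measurable_funM.
split=> //; have := integrable_comb measurableT (2 * p ^+ 2) (2 * c ^+ 2) hf hg.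
apply: le_integrable => //.
  by apply/measurable_EFinP; apply: measurable_funM => //; exact: measurable_funX.
move=> x _; rewrite /= lee_fin ger0_norm; last by rewrite mulr_ge0 ?sqr_ge0.
apply: le_trans (ler_norm _); have := ler_wpM2r (w_ge0 x) (sqrD_le (p * f x) (c * g x)).
lra.
Qed.

Lemma wsqr_le_comb (k0 k1 k2 : R) f g h :
  weighted_L2 f -> weighted_L2 g -> weighted_L2 h ->
  (forall x, k0 * f x ^+ 2 <= k1 * g x ^+ 2 + k2 * h x ^+ 2) ->
  k0 * wsqr f <= k1 * wsqr g + k2 * wsqr h.
Proof.
move=> [_ hf] [_ hg] [_ hh] hpt; rewrite /wsqr -RintegralZl // -Rintegral_comb //.
apply: le_Rintegral => //; last by move=> x _; have := ler_wpM2r (w_ge0 x) (hpt x); lra.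
- by have := integrableZl measurableT k0 hf; apply: eq_integrable => // x _ /=; rewrite EFinM.
- exact: integrable_comb.
Qed.

End weighted_square.

Lemma weighted_L2_cst1 (R : realType) (f : R -> R) :
  weighted_L2 (fun=> 1) f <-> measurable_fun setT f /\ integrableT (fun x => f x ^+ 2).
Proof.
rewrite /weighted_L2 (_ : (fun x => f x ^+ 2 * 1) = (fun x => f x ^+ 2)) //.
by apply/funext => x; rewrite mulr1.
Qed.

Section inner_product.
Variables (R : realType) (e f : R -> R).
Hypotheses (me : measurable_fun setT e) (ie : integrableT (fun x => e x ^+ 2)).
Hypotheses (mf : measurable_fun setT f) (iF : integrableT (fun x => f x ^+ 2)).

Lemma integrable_mul : integrableT (fun x => e x * f x).
Proof.
have := integrable_comb measurableT (1 / 2) ((2 * 1)^-1) ie iF.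
apply: le_integrable => //; first exact/measurable_EFinP/measurable_funM.
move=> x _; rewrite /= lee_fin (le_trans (norm_mul_le_sqr _ _ ltr01)) //.
exact: ler_norm.
Qed.

Lemma norm_ip_le (t : R) : 0 < t ->
  `|ip e f| <= t / 2 * \int[mu]_x (e x ^+ 2) + (2 * t)^-1 * \int[mu]_x (f x ^+ 2).
Proof.
move=> t0; have hpt x : `|e x * f x| <= t / 2 * e x ^+ 2 + (2 * t)^-1 * f x ^+ 2.
  exact: norm_mul_le_sqr.
rewrite -Rintegral_comb // ler_norml.
rewrite (_ : - _ = \int[mu]_x (- (t / 2) * e x ^+ 2 + - (2 * t)^-1 * f x ^+ 2)); last first.
  by rewrite !Rintegral_comb //; ring.
apply/andP; split; apply: le_Rintegral => //; try exact: integrable_mul; try exact: integrable_comb.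
- by move=> x _; have := hpt x; rewrite ler_norml !mulNr -opprD => /andP[].
- by move=> x _; have := hpt x; rewrite ler_norml => /andP[].
Qed.

(* When L2norm f = 0 the hypothesis only concerns ip e 0, as f / 0 = 0. *)
Lemma norm_ip_normalized_le (t : R) :
  `|ip e (fun x => f x / L2norm f)| <= t -> `|ip e f| <= L2norm f * t.
Proof.
have [n0|n0] := eqVneq (L2norm f) 0.
  have F0 : \int[mu]_x (f x ^+ 2) = 0.
    move: n0 => /eqP; rewrite sqrtr_eq0 => F0; apply/eqP; rewrite eq_le F0.
    by apply: Rintegral_ge0 => x _; exact: sqr_ge0.
  move=> _; rewrite n0 mul0r; apply: (le0_of_le_mul_gt0 (E := \int[mu]_x (e x ^+ 2) / 2)).
    by rewrite divr_ge0 //; apply: Rintegral_ge0 => x _; exact: sqr_ge0.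
  by move=> s s0; have := norm_ip_le s0; rewrite F0 mulr0 addr0 mulrAC -mulrA.
have n_gt0 : 0 < L2norm f by rewrite lt_def n0 /L2norm sqrtr_ge0.
rewrite /ip (_ : \int[mu]_x _ = \int[mu]_x (e x * f x) / L2norm f); last first.
  by rewrite -RintegralZr ?integrable_mul //; apply: eq_Rintegral => x _; rewrite mulrA.
by rewrite normrM normfV (gtr0_norm n_gt0) ler_pdivrMr // mulrC.
Qed.

Lemma sqr_ip_le (t : R) :
  `|ip e (fun x => f x / L2norm f)| <= t -> ip e f ^+ 2 <= L2norm f ^+ 2 * t ^+ 2.
Proof.
move=> /norm_ip_normalized_le h.
rewrite -exprMn -real_normK ?num_real //; have := normr_ge0 (ip e f); nra.
Qed.

End inner_product.

Lemma ip_sub_comb (R : realType) (p c : R) (e e1 e2 f : R -> R) :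
  integrableT (fun x => e x * f x) -> integrableT (fun x => e1 x * f x) ->
  integrableT (fun x => e2 x * f x) ->
  ip (fun x => e x - (p * e1 x + c * e2 x)) f = ip e f - (p * ip e1 f + c * ip e2 f).
Proof.
move=> ie i1 i2; have i12 := integrable_comb measurableT p c i1 i2.
rewrite /ip -Rintegral_comb // -[X in X - _]mul1r -mulN1r -Rintegral_comb //.
by apply: eq_Rintegral => x _; ring.
Qed.

Section H1alpha.
Variables (R : realType) (b A xs : R).
Local Notation alpha := (alpha b A xs).
Local Notation H1alpha := (H1alpha b A xs).

Lemma alpha_ge0 x : 0 <= alpha x.
Proof. exact: powR_ge0. Qed.

Lemma H1alpha0 : H1alpha (fun=> 0) (fun=> 0).
Proof.
have i0 (D : set R) (h : R -> R) : measurable D -> (forall x, h x = 0) ->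
    mu.-integrable D (EFin \o h).
  move=> mD h0; apply: (eq_integrable _ (cst 0%E)) => //; last exact: integrable0.
  by move=> x _ /=; rewrite h0.
split; first by split; exact: measurable_cst.
- by apply: i0 => // x; rewrite expr0n.
- split; first by apply: i0 => // x; rewrite expr0n.
  move=> x y _; split; first exact: i0.
  by rewrite subrr Rintegral_cst // mul0r.
- by apply: i0 => // x; rewrite expr2 !mul0r.
- by apply: i0 => // x; rewrite expr2 !mul0r.
Qed.

Lemma H1a_sqnorm_ge0 e g : 0 <= H1a_sqnorm b A xs e g.
Proof. by apply: Rintegral_ge0 => x _; rewrite mulr_ge0 ?addr_ge0 ?sqr_ge0 ?alpha_ge0. Qed.

Lemma H1alpha_L2 e g : H1alpha e g ->
  [/\ weighted_L2 (fun=> 1) e, weighted_L2 (fun=> 1) g,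
      weighted_L2 alpha e & weighted_L2 alpha g].
Proof.
by move=> [[me mg] ie [ig _] iae iag]; split=> //; apply/weighted_L2_cst1.
Qed.

Lemma H1alpha_integrable_mul e g (f : R -> R) : H1alpha e g ->
  measurable_fun setT f -> integrableT (fun x => f x ^+ 2) -> integrableT (fun x => e x * f x).
Proof. by move=> /H1alpha_L2[/weighted_L2_cst1[me ie] _ _ _]; exact: integrable_mul. Qed.

Lemma H1alpha_comb (p c : R) e1 g1 e2 g2 : H1alpha e1 g1 -> H1alpha e2 g2 ->
  H1alpha (fun x => p * e1 x + c * e2 x) (fun x => p * g1 x + c * g2 x).
Proof.
move=> H1 H2; have [Le1 Lg1 Lae1 Lag1] := H1alpha_L2 H1.
have [Le2 Lg2 Lae2 Lag2] := H1alpha_L2 H2.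
have cst1 : measurable_fun [set: R] (fun=> 1 : R) by exact: measurable_cst.
have [me ie] := (weighted_L2_cst1 _).1 (weighted_L2_comb cst1 (fun=> ler01) p c Le1 Le2).
have [mg ig] := (weighted_L2_cst1 _).1 (weighted_L2_comb cst1 (fun=> ler01) p c Lg1 Lg2).
have [_ iae] := weighted_L2_comb (measurable_alpha b A xs) alpha_ge0 p c Lae1 Lae2.
have [_ iag] := weighted_L2_comb (measurable_alpha b A xs) alpha_ge0 p c Lag1 Lag2.
case: H1 H2 => _ _ [_ iv1] _ _ [_ _ [_ iv2] _ _].
split=> //; split=> // x y xy; have [[i1 v1] [i2 v2]] := (iv1 x y xy, iv2 x y xy).
by split; [exact: integrable_comb | rewrite Rintegral_comb // -v1 -v2; ring].
Qed.

Lemma H1alpha_sub e1 g1 e2 g2 : H1alpha e1 g1 -> H1alpha e2 g2 ->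
  H1alpha (fun x => e1 x - e2 x) (fun x => g1 x - g2 x).
Proof.
have E (f h : R -> R) : (fun x => f x - h x) = (fun x => 1 * f x + -1 * h x).
  by apply/funext => x; rewrite mul1r mulN1r.
by rewrite !E; exact: H1alpha_comb.
Qed.

Lemma H1a_sqnormE e g : H1alpha e g ->
  H1a_sqnorm b A xs e g = wsqr alpha e + wsqr alpha g.
Proof.
move=> /H1alpha_L2[_ _ [_ iae] [_ iag]].
rewrite /H1a_sqnorm -[wsqr _ e]mul1r -[wsqr _ g]mul1r -Rintegral_comb //.
by apply: eq_Rintegral => x _; ring.
Qed.

Lemma ip_H1alpha_sub_comb (p c : R) e g e1 g1 e2 g2 (f : R -> R) :
  H1alpha e g -> H1alpha e1 g1 -> H1alpha e2 g2 ->
  measurable_fun setT f -> integrableT (fun x => f x ^+ 2) ->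
  ip (fun x => e x - (p * e1 x + c * e2 x)) f = ip e f - (p * ip e1 f + c * ip e2 f).
Proof.
move=> He H1 H2 mf iF; apply: ip_sub_comb; [exact: H1alpha_integrable_mul He mf iF |
  exact: H1alpha_integrable_mul H1 mf iF | exact: H1alpha_integrable_mul H2 mf iF].
Qed.

Lemma LformE e g : Lform b A xs e g =
  2 * kk b A / b ^+ 2 * wsqr alpha g - 2 * kk b A * (b + 1) / b * wsqr alpha e.
Proof. by []. Qed.

Lemma H1a_sqnorm_comb_le (p c : R) e1 g1 e2 g2 : H1alpha e1 g1 -> H1alpha e2 g2 ->
  H1a_sqnorm b A xs (fun x => p * e1 x + c * e2 x) (fun x => p * g1 x + c * g2 x)
    <= 2 * (p ^+ 2 + c ^+ 2) * (H1a_sqnorm b A xs e1 g1 + H1a_sqnorm b A xs e2 g2).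
Proof.
move=> H1 H2; have H12 := H1alpha_comb p c H1 H2.
rewrite (H1a_sqnormE H12) (H1a_sqnormE H1) (H1a_sqnormE H2).
have [_ _ Le Lg] := H1alpha_L2 H12.
have [_ _ Le1 Lg1] := H1alpha_L2 H1; have [_ _ Le2 Lg2] := H1alpha_L2 H2.
have wle := wsqr_le_comb alpha_ge0 (k0 := 1) (k1 := 2 * p ^+ 2) (k2 := 2 * c ^+ 2).
have hpt (f1 f2 : R -> R) x : 1 * (p * f1 x + c * f2 x) ^+ 2 <=
    2 * p ^+ 2 * f1 x ^+ 2 + 2 * c ^+ 2 * f2 x ^+ 2.
  by have := sqrD_le (p * f1 x) (c * f2 x); lra.
have := wle _ _ _ Le Le1 Le2 (hpt e1 e2); have := wle _ _ _ Lg Lg1 Lg2 (hpt g1 g2).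
have := wsqr_ge0 alpha_ge0 e1; have := wsqr_ge0 alpha_ge0 g1.
have := wsqr_ge0 alpha_ge0 e2; have := wsqr_ge0 alpha_ge0 g2.
have := sqr_ge0 p; have := sqr_ge0 c; nra.
Qed.

End H1alpha.

Lemma sum_sqr_ip_le (R : realType) (b A xs t : R) eta g :
  b < -1 -> 0 < A -> H1alpha b A xs eta g ->
  `| ip eta (fun x => SQ b A xs x / L2norm (SQ b A xs)) |
    + `| ip eta (fun x => dQ b A xs x / L2norm (dQ b A xs)) | <= t ->
  ip eta (SQ b A xs) ^+ 2 + ip eta (dQ b A xs) ^+ 2
    <= (L2norm (SQ b A xs) ^+ 2 + L2norm (dQ b A xs) ^+ 2) * t ^+ 2.
Proof.
move=> hb hA He; have [/weighted_L2_cst1[me ie] _ _ _] := H1alpha_L2 He.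
set s1 := `|_|; set s2 := `|_| => hs.
have [s10 s20] : 0 <= s1 /\ 0 <= s2 by split; exact: normr_ge0.
have h1 : s1 <= t by lra.
have h2 : s2 <= t by lra.
have := sqr_ip_le me ie (measurable_SQ b A xs) (integrable_SQ_sqr xs hb hA) h1.
have := sqr_ip_le me ie (measurable_dQ A xs hb) (integrable_dQ_sqr xs hb hA) h2.
lra.
Qed.

(** * Coercivity off the constrained subspace *)

Lemma Lform_ge_of_small_correction (R : realType) (b A xs l : R) : b < -1 -> 0 < l ->
  (forall eta g : R -> R, H1alpha b A xs eta g ->
     ip eta (dQ b A xs) = 0 -> ip eta (SQ b A xs) = 0 ->
     Lform b A xs eta g >= l * H1a_sqnorm b A xs eta g) ->
  exists2 B : R, 0 <= B & forall eta g v gv u gu,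
    H1alpha b A xs eta g -> H1alpha b A xs v gv -> H1alpha b A xs u gu ->
    (forall x, eta x = v x + u x) -> (forall x, g x = gv x + gu x) ->
    ip v (dQ b A xs) = 0 -> ip v (SQ b A xs) = 0 ->
    B * H1a_sqnorm b A xs u gu <= l / 8 * H1a_sqnorm b A xs eta g ->
    3 * l / 4 * H1a_sqnorm b A xs eta g <= Lform b A xs eta g.
Proof.
move=> hb hl hcoer; set c1 := 2 * kk b A / b ^+ 2; set c2 := 2 * kk b A * (b + 1) / b.
have k0 : 0 <= kk b A := powR_ge0 _ _.
have c10 : 0 <= c1 by rewrite /c1 divr_ge0 ?sqr_ge0 ?mulr_ge0.
have c20 : 0 <= c2.
  have : 0 <= (b + 1) / b by rewrite -mulrNN -invrN divr_ge0 //; lra.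
  by rewrite /c2 -mulrA => hb0; apply: mulr_ge0 => //; rewrite mulr_ge0.
set d := l / (32 * (l + c2)).
have d0 : 0 < d by rewrite divr_gt0 //; lra.
have dsmall : d * (l + c2) <= l / 32.
  have lc : 0 < l + c2 by lra.
  by rewrite /d -mulrA invfM -mulrA mulVf ?gt_eqF // mulr1.
exists ((c1 + 2 * c2 + l) / d); first by rewrite divr_ge0 ?ltW //; lra.
move=> eta g v gv u gu He Hv Hu etaE gE hdQ hSQ hsmall.
have := hcoer _ _ Hv hdQ hSQ; rewrite !LformE !H1a_sqnormE // in hsmall * => hcoer_v.
have [_ _ Le Lg] := H1alpha_L2 He; have [_ _ Lv Lgv] := H1alpha_L2 Hv.
have [_ _ Lu Lgu] := H1alpha_L2 Hu.
have a0 := @alpha_ge0 _ b A xs; have W0 := wsqr_ge0 a0.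
set W := wsqr (alpha b A xs) in W0 hcoer_v hsmall *.
have hD : (1 - d) * W gv <= 1 * W g + d^-1 * W gu.
  by apply: (wsqr_le_comb a0) => // x; rewrite gE; have := sqrD_ge_eps (gv x) (gu x) d0; lra.
have hP : 1 * W eta <= (1 + d) * W v + (1 + d^-1) * W u.
  by apply: (wsqr_le_comb a0) => // x; rewrite etaE mul1r; exact: sqrD_le_eps.
have hNv : (1 - d) * W eta <= 1 * W v + d^-1 * W u.
  apply: (wsqr_le_comb a0) => // x; rewrite etaE.
  by have := sqrD_ge_eps (v x + u x) (- u x) d0; rewrite sqrrN addrK; lra.
have hNgv : (1 - d) * W g <= 1 * W gv + d^-1 * W gu.
  apply: (wsqr_le_comb a0) => // x; rewrite gE.
  by have := sqrD_ge_eps (gv x + gu x) (- gu x) d0; rewrite sqrrN addrK; lra.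
apply: (perturbed_coercivity (P := W eta) (D := W g) (Pv := W v) (Dv := W gv)
  (Pu := W u) (Du := W gu) c10 c20 hl d0 dsmall); rewrite ?addr_ge0 //; lra.
Qed.

Theorem lemma2p6 (R : realType) (b A xs lambda1 : R)
  (hb : b < -1) (hA : 0 < A) (hl : 0 < lambda1)
  (hcoer : forall eta g : R -> R, H1alpha b A xs eta g ->
     ip eta (dQ b A xs) = 0 -> ip eta (SQ b A xs) = 0 ->
     Lform b A xs eta g >= lambda1 * H1a_sqnorm b A xs eta g) :
  exists theta : R, 0 < theta /\
    forall eta g : R -> R, H1alpha b A xs eta g ->
      `| ip eta (fun x => SQ b A xs x / L2norm (SQ b A xs)) |
      + `| ip eta (fun x => dQ b A xs x / L2norm (dQ b A xs)) |
        <= theta * H1a_norm b A xs eta g ->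
      Lform b A xs eta g >= 3 * lambda1 / 4 * H1a_sqnorm b A xs eta g.
Proof.
have [B B0 hB] := Lform_ge_of_small_correction hb hl hcoer.
have [[w1 h1] [[w2 h2] [K [/= Hw1 Hw2 K0 span]]]] :=
  planar_span_bounded (H := fun p => H1alpha b A xs p.1 p.2)
    (fun p => ip p.1 (SQ b A xs)) (fun p => ip p.1 (dQ b A xs))
    (ex_intro _ (_, _) (H1alpha0 b A xs)).
set S := L2norm (SQ b A xs) ^+ 2 + L2norm (dQ b A xs) ^+ 2.
set M := H1a_sqnorm b A xs w1 h1 + H1a_sqnorm b A xs w2 h2.
have M0 : 0 <= M by rewrite addr_ge0 ?H1a_sqnorm_ge0.
have [th th0 hth] : exists2 th, 0 < th & B * (2 * K * S * M) * th ^+ 2 <= lambda1 / 8.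
  apply: exists_small_sqr; last by rewrite divr_gt0.
  by rewrite !mulr_ge0 // /S addr_ge0 ?sqr_ge0.
exists th; split=> // eta g He hsmall.
have [a [c [/= hSQ hdQ hac]]] := span (eta, g) He.
have Hu := H1alpha_comb a c Hw1 Hw2.
apply: (hB _ _ _ _ _ _ He (H1alpha_sub He Hu) Hu) => [x|x|||]; rewrite ?subrK //.
- have := ip_H1alpha_sub_comb a c He Hw1 Hw2 (measurable_dQ A xs hb) (integrable_dQ_sqr xs hb hA).
  by rewrite hdQ subrr.
- have := ip_H1alpha_sub_comb a c He Hw1 Hw2 (measurable_SQ b A xs) (integrable_SQ_sqr xs hb hA).
  by rewrite hSQ subrr.
have Ne0 := H1a_sqnorm_ge0 b A xs eta g.
have := sum_sqr_ip_le hb hA He hsmall; rewrite exprMn /H1a_norm (sqr_sqrtr Ne0) -/S => hip.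
apply: le_trans (ler_wpM2l B0 (H1a_sqnorm_comb_le a c Hw1 Hw2)) _.
have := ler_wpM2r Ne0 hth; have hac' := le_trans hac (ler_wpM2l K0 hip).
have := ler_wpM2l B0 (ler_wpM2r M0 (ler_wpM2l (ler0n _ 2) hac')).
rewrite -/M; lra.
Qed.
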